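(* Assume the refinement setting of the context, with $F(u)=u$, $G(u)=u$, $p\cap\overline{q}\subseteq F(p\cup q)$, $p\cap\overline{q}\subseteq\mathrm{grd}(G)$, $p\cap\overline{q}\subseteq G(q)$, and additionally $$r^{-1}[p\cap\overline{q}]\cap\mathrm{grd}(G')\subseteq F'(\mathrm{grd}(G'))\cap H(\mathrm{grd}(G')).$$ Let $p'=r^{-1}[p]$, $q'=r^{-1}[q]$, $a=p'\cap\mathrm{grd}(G')$ and $S'(s)=F'(s)\cap G'(s)\cap H(s)$. Then $a\cap\overline{q'}\subseteq S'(a\cup q')$ and $a\cap\overline{q'}\subseteq\mathrm{grd}(G')\cap G'(q')$; that is, the basic liveness property $G'\cdot\, a\gg_w q'$ holds in the concrete system $S'$.
   Context: Refinement setting: $u$ (abstract states) and $v$ (concrete states) are sets; $F,G$ are conjunctive set transformers on $u$ and $F',G',H$ conjunctive set transformers on $v$ (conjunctive = preserves intersections of nonempty families of subsets, hence monotone). $\mathrm{grd}(E)=\overline{E(\varnothing)}$. $r\subseteq v\times u$ is a total relation (every $y\in v$ is related to some $x\in u$). For $a\subseteq v$, $r[a]=\{x\in u\mid\exists y\in a,(y,x)\in r\}$; for $b\subseteq u$, $r^{-1}[b]=\{y\in v\mid\exists x\in b,(y,x)\in r\}$. Complements $\overline{\cdot}$ are taken in $u$ for subsets of $u$ and in $v$ for subsets of $v$. The refinement conditions are: for all $s\subseteq v$, $F(\overline{r[\overline{s}]})\subseteq\overline{r[\overline{F'(s)}]}$, $G(\overline{r[\overline{s}]})\subseteq\overline{r[\overline{G'(s)}]}$,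 and $\overline{r[\overline{s}]}\subseteq\overline{r[\overline{H(s)}]}$. $p,q\subseteq u$. In a system $S$ (choice of its events, $S(s)=\bigcap_i E_i(s)$), the basic liveness property (ensures) $G\cdot a\gg_w b$ for a helpful event $G$ (choice of a nonempty subfamily of the events) means $a\cap\overline{b}\subseteq S(a\cup b)$ and $a\cap\overline{b}\subseteq\mathrm{grd}(G)\cap G(b)$. *)

From mathcomp Require Import all_boot.
From mathcomp Require Export boolp classical_sets.
Set Implicit Arguments. Unset Strict Implicit. Unset Printing Implicit Defensive.
Local Open Scope classical_set_scope.

Definition conjunctive (T : Type) (E : set T -> set T) : Prop :=
  forall S : set (set T), S !=set0 ->
    E (\bigcap_(X in S) X) = \bigcap_(X in S) E X.

Definition grd (T : Type) (E : set T -> set T) : set T := ~` (E set0).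

(* r ⊆ v × u ; (y, x) ∈ r  is  r y x *)
Definition total_rel (V U : Type) (r : V -> U -> Prop) : Prop :=
  forall y : V, exists x : U, r y x.

Definition rimg (V U : Type) (r : V -> U -> Prop) (a : set V) : set U :=
  [set x | exists2 y, a y & r y x].

Definition rpre (V U : Type) (r : V -> U -> Prop) (b : set U) : set V :=
  [set y | exists2 x, b x & r y x].

(* Basic liveness property (ensures) G · a ≫_w b in a system with
   set transformer S (the choice of its events) *)
Definition ensures_w (T : Type) (S G : set T -> set T) (a b : set T) : Prop :=
  a `&` ~` b `<=` S (a `|` b) /\ a `&` ~` b `<=` grd G `&` G b.

From mathcomp Require Import all_boot boolp classical_sets.
Local Open Scope classical_set_scope.
Set Implicit Arguments.
Unset Strict Implicit.
Unset Printing Implicit Defensive.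

(* Writing [[r] s] for the set of abstract states all of whose concrete
   representatives lie in [s], the refinement conditions say that an abstract
   transformer [E] applied to [[r] s] lands in [[r] (E' s)].  Hence every
   abstract inclusion [b <= E t] transfers to the concrete inclusion
   [r^-1[b] <= E' (r^-1[t])], since [t <= [r] (r^-1[t])].  Instantiating this
   with the three abstract hypotheses gives the concrete [F'], [G'] and [H]
   parts at the target [q'] and [p' \/ q'], and conjunctivity combines the
   latter with the extra hypothesis on [grd G'] to reach [a \/ q']. *)

Section Conjunctive.
Variables (T : Type) (E : set T -> set T).
Hypothesis conjE : conjunctive E.

Lemma conjunctiveI (A B : set T) : E (A `&` B) = E A `&` E B.
Proof.
have AorB_neq0 : [set X | X = A \/ X = B] !=set0 by exists A; left.
have bigcap_AB (f : set T -> set T) :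
    \bigcap_(X in [set X | X = A \/ X = B]) f X = f A `&` f B.
  apply/seteqP; split=> [x fx | x [fA fB] X [->|->] //].
  by split; apply: fx; [left | right].
by rewrite -(bigcap_AB id) conjE // bigcap_AB.
Qed.

Lemma conjunctive_le (A B : set T) : A `<=` B -> E A `<=` E B.
Proof. by move=> /setIidl <-; rewrite conjunctiveI => x []. Qed.

End Conjunctive.

Lemma conjunctive_id (T : Type) : conjunctive (@id (set T)).
Proof. by []. Qed.

Section Refinement.
Variables (V U : Type) (r : V -> U -> Prop).

Definition rbox (s : set V) : set U := ~` rimg r (~` s).

Lemma rboxP (s : set V) x y : rbox s x -> r y x -> s y.
Proof. by move=> sx ryx; apply: contrapT => nsy; apply: sx; exists y. Qed.

Lemma sub_rbox_rpre (b : set U) : b `<=` rbox (rpre r b).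
Proof. by move=> x bx [y nby ryx]; apply: nby; exists x. Qed.

Lemma rpreU (A B : set U) : rpre r (A `|` B) = rpre r A `|` rpre r B.
Proof.
apply/seteqP; split=> [y [x [Ax|Bx] ryx] | y [[x Ax ryx]|[x Bx ryx]]].
- by left; exists x.
- by right; exists x.
- by exists x; first left.
- by exists x; first right.
Qed.

Lemma rpreI_setC (A B : set U) :
  rpre r A `&` ~` rpre r B `<=` rpre r (A `&` ~` B).
Proof.
move=> y [[x Ax ryx] nBy]; exists x => //.
by split=> // Bx; apply: nBy; exists x.
Qed.

Lemma refines_rpre (E : set U -> set U) (E' : set V -> set V) (b t : set U) :
  conjunctive E -> (forall s, E (rbox s) `<=` rbox (E' s)) ->
  b `<=` E t -> rpre r b `<=` E' (rpre r t).
Proof.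
move=> conjE refE bEt y [x bx ryx].
apply: rboxP ryx; apply: refE.
by apply: (conjunctive_le conjE (@sub_rbox_rpre t)); apply: bEt.
Qed.

End Refinement.

Theorem lemma6 (u v : Type)
  (F G : set u -> set u) (F' G' H : set v -> set v)
  (r : v -> u -> Prop) (p q : set u) :
  conjunctive F -> conjunctive G ->
  conjunctive F' -> conjunctive G' -> conjunctive H ->
  total_rel r ->
  (forall s : set v, F (~` rimg r (~` s)) `<=` ~` rimg r (~` F' s)) ->
  (forall s : set v, G (~` rimg r (~` s)) `<=` ~` rimg r (~` G' s)) ->
  (forall s : set v, ~` rimg r (~` s) `<=` ~` rimg r (~` H s)) ->
  F setT = setT -> G setT = setT ->
  p `&` ~` q `<=` F (p `|` q) ->
  p `&` ~` q `<=` grd G ->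
  p `&` ~` q `<=` G q ->
  rpre r (p `&` ~` q) `&` grd G' `<=` F' (grd G') `&` H (grd G') ->
  let p' := rpre r p in
  let q' := rpre r q in
  let a := p' `&` grd G' in
  let S' := fun s : set v => F' s `&` G' s `&` H s in
  a `&` ~` q' `<=` S' (a `|` q') /\ a `&` ~` q' `<=` grd G' `&` G' q'.
Proof.
move=> cF cG cF' cG' cH _ rF rG rH _ _ hF _ hG hgrd p' q' a S'.
have pq_sub : p `&` ~` q `<=` p `|` q by move=> x [px _]; left.
have to_target : (p' `|` q') `&` grd G' `<=` a `|` q'.
  by move=> y [[p'y|q'y] gy]; [left | right].
have Fpq := refines_rpre cF rF hF.
have Hpq := refines_rpre (@conjunctive_id _) rH pq_sub.
have Gq := refines_rpre cG rG hG.
rewrite rpreU in Fpq Hpq.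
have Gq' : a `&` ~` q' `<=` G' q'.
  by move=> y [[p'y _] nq'y]; apply: Gq; apply: rpreI_setC.
split=> y [ay nq'y]; last by split; [exact: ay.2 | exact: Gq'].
have pnq : rpre r (p `&` ~` q) y by apply: rpreI_setC; split; [exact: ay.1 |].
have [Fg Hg] := hgrd y (conj pnq ay.2).
split; [split|].
- apply: (conjunctive_le cF' to_target); rewrite conjunctiveI //.
  by split=> //; apply: Fpq.
- by apply: (conjunctive_le cG' (@subsetUr _ a q')); apply: Gq'.
- apply: (conjunctive_le cH to_target); rewrite conjunctiveI //.
  by split=> //; apply: Hpq.
Qed.
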